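(* Let $x,y \in \mathbb{N}$, let $S$ be a finite set of functions $f_i(z) = a_i z + b_i$ ($1 \le i \le N$) with $a_i, b_i \in \mathbb{Z}$ and $a_i > 0$, let $k > 0$ be an integer and $g(z) = z - k$, and put $F = S \cup \{g\}$. Then $x \xrightarrow{F}_+ y$ if and only if there exists $z \in \mathbb{Z}$ with $z \ge y$, $z \equiv y \pmod k$, and $x \xrightarrow{S}_+ z$.
   Context: $\mathbb{N} = \{0,1,2,\dots\}$. For a set $S$ of affine functions $\mathbb{Z}\to\mathbb{Z}$, an $S$-composition is a finite tuple $(s_1,\dots,s_K)$ with $K \ge 0$ and each $s_i \in S$, identified with the function $s_K \circ \dots \circ s_1$. Its orbit at $x$ is $\{x, s_1(x), (s_2\circ s_1)(x), \dots, (s_K\circ\dots\circ s_1)(x)\}$. The composition is valid with respect to $x$ if every element of its orbit at $x$ is nonnegative. We write $x \xrightarrow{S}_+ y$ if there is an $S$-composition $G$ valid with respect to $x$ with $G(x) = y$. *)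

From Stdlib Require Import ZArith List.
Open Scope Z_scope.

Definition aff : Type := (Z * Z)%type.
Definition app_aff (f : aff) (z : Z) : Z := fst f * z + snd f.

(* An S-composition (s_1, ..., s_K), as a list [s_1; ...; s_K] applied left to
   right: comp_apply [s_1;...;s_K] x = (s_K o ... o s_1)(x). *)
Fixpoint comp_apply (l : list aff) (x : Z) : Z :=
  match l with
  | nil => x
  | f :: l' => comp_apply l' (app_aff f x)
  end.

Fixpoint valid_from (l : list aff) (x : Z) : Prop :=
  match l with
  | nil => 0 <= x
  | f :: l' => 0 <= x /\ valid_from l' (app_aff f x)
  end.

Definition reach_pos (S : aff -> Prop) (x y : Z) : Prop :=
  exists l : list aff, Forall S l /\ valid_from l x /\ comp_apply l x = y.

(* Composing such maps commutes with g up to postponement: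
   if f(z) = a z + b with a >= 0, then f (z + m k) = f z + (a m) k, so a
   subtraction of k performed before f can be replaced by a subtraction of
   a m k performed afterwards, and raising the orbit never breaks validity.

   Consequently an (S ∪ {g})-composition from x to y can be rewritten as an
   S-composition from x to some y + m k (m >= 0), followed by m copies of g
   (lemma [reach_pos_postpone_decrements]).  Conversely, from any z >= y with
   z ≡ y (mod k) the point y is reached by (z - y)/k copies of g, all of
   whose intermediate values stay above y >= 0 (lemma [reach_pos_decrements]). *)

From Stdlib Require Import ZArith List Lia.
Open Scope Z_scope.

Lemma app_aff_shift (f : aff) (x d : Z) :
  app_aff f (x + d) = app_aff f x + fst f * d.
Proof. unfold app_aff; ring. Qed.

Lemma comp_apply_app (l1 l2 : list aff) (x : Z) :
  comp_apply (l1 ++ l2) x = comp_apply l2 (comp_apply l1 x).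
Proof. revert x; induction l1 as [|f l1 IH]; intro x; simpl; auto. Qed.

Lemma valid_from_app (l1 l2 : list aff) (x : Z) :
  valid_from l1 x -> valid_from l2 (comp_apply l1 x) -> valid_from (l1 ++ l2) x.
Proof.
  revert x; induction l1 as [|f l1 IH]; simpl; intros x H1 H2; [exact H2|].
  destruct H1 as [Hx H1]; split; auto.
Qed.

Lemma reach_pos_trans (P : aff -> Prop) (x y z : Z) :
  reach_pos P x y -> reach_pos P y z -> reach_pos P x z.
Proof.
  intros [l1 [HF1 [Hv1 Hc1]]] [l2 [HF2 [Hv2 Hc2]]].
  exists (l1 ++ l2); split; [apply Forall_app; auto|split].
  - apply valid_from_app; [exact Hv1 | now rewrite Hc1].
  - now rewrite comp_apply_app, Hc1.
Qed.

Lemma reach_pos_mono (P Q : aff -> Prop) (x y : Z) :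
  (forall f, P f -> Q f) -> reach_pos P x y -> reach_pos Q x y.
Proof.
  intros HPQ [l [HF Hv]]; exists l; split; [eapply Forall_impl; eauto | exact Hv].
Qed.

Section Decrements.

Variable k : Z.
Hypothesis k_ge0 : 0 <= k.

Let g : aff := (1, - k).

(* n copies of g lead from z to z - n k, validly as soon as the endpoint is
   nonnegative, since the orbit decreases. *)
Lemma repeat_decrement (n : nat) (z : Z) :
  0 <= z - Z.of_nat n * k ->
  valid_from (repeat g n) z /\ comp_apply (repeat g n) z = z - Z.of_nat n * k.
Proof.
  revert z; induction n as [|n IH]; intros z Hz; simpl repeat; simpl comp_apply.
  - simpl; split; lia.
  - rewrite Nat2Z.inj_succ in *.
    assert (Hg : app_aff g z = z - k) by (unfold app_aff; cbn [fst snd g]; ring).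
    destruct (IH (app_aff g z)) as [Hv Hc]; rewrite Hg in *; [lia|].
    split; [simpl; split; [nia | now rewrite Hg] | rewrite Hc; lia].
Qed.

Lemma reach_pos_decrements (y z : Z) :
  0 <= y -> y <= z -> (k | z - y) -> reach_pos (fun f => f = g) z y.
Proof.
  intros Hy Hyz [q Hq].
  assert (Hq0 : 0 <= q * k) by lia.
  destruct (Z.eq_dec k 0) as [Hk0 | Hk0].
  - exists nil; simpl; repeat split; [constructor | lia | lia].
  - assert (Hq0' : 0 <= q) by nia.
    destruct (repeat_decrement (Z.to_nat q) z) as [Hv Hc]; [rewrite Z2Nat.id; lia|].
    exists (repeat g (Z.to_nat q)); split; [|split; [exact Hv|]].
    + apply Forall_forall; intros f Hf; now apply repeat_spec in Hf.
    + rewrite Hc, Z2Nat.id; lia.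
Qed.

Variable P : aff -> Prop.
Hypothesis P_slope_nonneg : forall f, P f -> 0 <= fst f.

(* Postponement: a valid (P ∪ {g})-composition from x, replayed from the raised
   start x + m k with the copies of g removed, is a valid P-composition whose
   endpoint exceeds the original one by a nonnegative multiple of k. *)
Lemma postpone_decrements (l : list aff) (x m : Z) :
  Forall (fun f => P f \/ f = g) l -> valid_from l x -> 0 <= m ->
  exists l' m', Forall P l' /\ valid_from l' (x + m * k) /\
    comp_apply l' (x + m * k) = comp_apply l x + m' * k /\ 0 <= m'.
Proof.
  revert x m; induction l as [|f l IH]; intros x m HF Hv Hm.
  - exists nil, m; simpl in *; split; [constructor | repeat split; nia].
  - inversion HF as [|? ? Hf HF']; subst; destruct Hv as [Hx Hv].
    destruct Hf as [Hf | ->].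
    + (* keep f, and carry the shift (slope * m) k past it *)
      pose proof (P_slope_nonneg f Hf) as Ha.
      destruct (IH (app_aff f x) (fst f * m) HF' Hv) as [l' [m' [H1 [H2 [H3 H4]]]]];
        [nia|].
      assert (E : app_aff f (x + m * k) = app_aff f x + fst f * m * k)
        by (rewrite app_aff_shift; ring).
      exists (f :: l'), m'; simpl; rewrite E; repeat split; auto; nia.
    + (* drop g, absorbing it into one more unit of shift *)
      destruct (IH (app_aff g x) (m + 1) HF' Hv) as [l' [m' [H1 [H2 [H3 H4]]]]];
        [lia|].
      assert (E : app_aff g x + (m + 1) * k = x + m * k)
        by (unfold app_aff; cbn [fst snd g]; ring).
      rewrite E in H2, H3; exists l', m'; simpl; repeat split; auto.
Qed.

Lemma reach_pos_postpone_decrements (x y : Z) :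
  reach_pos (fun f => P f \/ f = g) x y ->
  exists m, 0 <= m /\ reach_pos P x (y + m * k).
Proof.
  intros [l [HF [Hv Hc]]].
  destruct (postpone_decrements l x 0 HF Hv) as [l' [m' [H1 [H2 [H3 H4]]]]]; [lia|].
  rewrite Z.mul_0_l, Z.add_0_r in H2, H3.
  exists m'; split; [exact H4|]; exists l'; repeat split; auto; now rewrite H3, Hc.
Qed.

End Decrements.

Theorem mainTheorem11 (x y : Z) (S : list aff) (k : Z) :
  0 <= x -> 0 <= y ->
  (forall f, In f S -> 0 < fst f) ->
  0 < k ->
  reach_pos (fun f => In f S \/ f = (1, - k)) x y <->
  exists z : Z, y <= z /\ (k | z - y) /\ reach_pos (fun f => In f S) x z.
Proof.
  intros Hx Hy HS Hk; split.
  - intro Hreach.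
    destruct (reach_pos_postpone_decrements k ltac:(lia) (fun f => In f S)
                (fun f Hf => Z.lt_le_incl _ _ (HS f Hf)) x y Hreach)
      as [m [Hm HreachS]].
    exists (y + m * k); repeat split; [nia | exists m; ring | exact HreachS].
  - intros [z [Hyz [Hdiv HreachS]]].
    apply reach_pos_trans with z.
    + eapply reach_pos_mono; [|exact HreachS]; simpl; auto.
    + eapply reach_pos_mono; [|exact (reach_pos_decrements k ltac:(lia) y z Hy Hyz Hdiv)].
      simpl; auto.
Qed.
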